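(* Let $A,B$ be idempotent $\Gamma$-graded rings and ${}_AP_B$, ${}_BQ_A$ graded bimodules unital on both sides, such that there is a graded Morita context $(A,B,P,Q,\mu,\nu)$ with surjective trace maps. For every unital graded left $A$-module $U$, there is an isomorphism of graded left $B$-modules $B\cdot\mathrm{HOM}_A(P,U)\cong B\cdot\mathrm{HOM}_A(P,U/t_A(U))$.
   Context: $\Gamma$ is a fixed multiplicative group with identity $e$. Rings are associative $\Gamma$-graded, not necessarily unital; $A$ is idempotent if $A^2=A$; a module is unital if $AM=M$; $t_A(U)=\{u\in U: Au=0\}$. A left-linear $f$ is graded of degree $\sigma$ if $f(M_\tau)\subseteq N_{\tau\sigma}$; $\mathrm{HOM}$ is the direct sum over degrees; $\mathrm{HOM}_A(P,N)$ is a graded left $B$-module via $(bf)(p)=f(pb)$; $B\cdot H$ denotes finite sums $\sum b_ih_i$. A graded Morita context $(A,B,P,Q,\mu,\nu)$: idempotent graded rings $A,B$, graded bimodules ${}_AP_B$, ${}_BQ_A$ unital on both sides, degree-$e$ graded bimodule maps $\mu:P\otimes_BQ\to A$, $\langle p,q\rangle=\mu(p\otimes q)$, $\nu:Q\otimes_AP\to B$, $[q,p]=\nu(q\otimes p)$, with $p'[q,p]=\langle p',q\rangle p$ and $q'\langle p,q\rangle=[q',p]q$. *)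

(* Gamma-graded, not necessarily unital rings and modules,
   written as explicit operations on zmodTypes with Prop-valued axioms. *)
From mathcomp Require Import all_boot all_algebra.
From Stdlib Require List.
Set Implicit Arguments. Unset Strict Implicit. Unset Printing Implicit Defensive.
Import GRing.Theory.
Local Open Scope ring_scope.

Record group_law (G : Type) := GroupLaw {
  gmul : G -> G -> G;
  gunit : G;
  ginv : G -> G;
  gmulA : forall x y z, gmul x (gmul y z) = gmul (gmul x y) z;
  gmul1g : forall x, gmul gunit x = x;
  gmulVg : forall x, gmul (ginv x) x = gunit }.

Section Graded.
Variables (G : Type) (g : group_law G).

(* gr s = the homogeneous component M_s. *)
Definition is_grading (M : zmodType) (gr : G -> M -> Prop) : Prop :=
  (forall s, gr s 0 /\ (forall x y, gr s x -> gr s y -> gr s (x - y))) /\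
  (forall m : M, exists l : seq (G * M),
      (forall x, List.In x l -> gr x.1 x.2) /\ m = \sum_(x <- l) x.2) /\
  (forall l : seq (G * M), List.NoDup (map fst l) ->
      (forall x, List.In x l -> gr x.1 x.2) ->
      \sum_(x <- l) x.2 = 0 -> forall x, List.In x l -> x.2 = 0).

Definition is_graded_ring (A : zmodType) (grA : G -> A -> Prop)
    (mul : A -> A -> A) : Prop :=
  is_grading grA /\
  (forall x y z, mul x (mul y z) = mul (mul x y) z) /\
  (forall x y z, mul x (y + z) = mul x y + mul x z) /\
  (forall x y z, mul (x + y) z = mul x z + mul y z) /\
  (forall s t x y, grA s x -> grA t y -> grA (gmul g s t) (mul x y)).

Definition idempotent_ring (A : zmodType) (mul : A -> A -> A) : Prop :=
  forall a : A, exists l : seq (A * A), a = \sum_(x <- l) mul x.1 x.2.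

Definition is_graded_lmod (A : zmodType) (grA : G -> A -> Prop) (mulA : A -> A -> A)
    (M : zmodType) (grM : G -> M -> Prop) (act : A -> M -> M) : Prop :=
  is_grading grM /\
  (forall a m m', act a (m + m') = act a m + act a m') /\
  (forall a a' m, act (a + a') m = act a m + act a' m) /\
  (forall a a' m, act (mulA a a') m = act a (act a' m)) /\
  (forall s t a m, grA s a -> grM t m -> grM (gmul g s t) (act a m)).

Definition is_graded_rmod (B : zmodType) (grB : G -> B -> Prop) (mulB : B -> B -> B)
    (M : zmodType) (grM : G -> M -> Prop) (act : M -> B -> M) : Prop :=
  is_grading grM /\
  (forall m m' b, act (m + m') b = act m b + act m' b) /\
  (forall m b b', act m (b + b') = act m b + act m b') /\
  (forall m b b', act m (mulB b b') = act (act m b) b') /\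
  (forall s t m b, grM s m -> grB t b -> grM (gmul g s t) (act m b)).

Definition lunital (A M : zmodType) (act : A -> M -> M) : Prop :=
  forall m : M, exists l : seq (A * M), m = \sum_(x <- l) act x.1 x.2.

Definition runital (B M : zmodType) (act : M -> B -> M) : Prop :=
  forall m : M, exists l : seq (M * B), m = \sum_(x <- l) act x.1 x.2.

Definition is_unital_graded_bimod
    (A : zmodType) (grA : G -> A -> Prop) (mulA : A -> A -> A)
    (B : zmodType) (grB : G -> B -> Prop) (mulB : B -> B -> B)
    (M : zmodType) (grM : G -> M -> Prop)
    (lact : A -> M -> M) (ract : M -> B -> M) : Prop :=
  is_graded_lmod grA mulA grM lact /\ is_graded_rmod grB mulB grM ract /\
  (forall a m b, ract (lact a m) b = lact a (ract m b)) /\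
  lunital lact /\ runital ract.

(* A degree-e graded bimodule map
   mu : P (x)_B Q -> A is given, via the universal property of the tensor
   product, by the B-balanced biadditive map <p,q> = mu (p (x) q). *)
Definition graded_morita_context
    (A : zmodType) (grA : G -> A -> Prop) (mulA : A -> A -> A)
    (B : zmodType) (grB : G -> B -> Prop) (mulB : B -> B -> B)
    (P : zmodType) (grP : G -> P -> Prop) (lP : A -> P -> P) (rP : P -> B -> P)
    (Q : zmodType) (grQ : G -> Q -> Prop) (lQ : B -> Q -> Q) (rQ : Q -> A -> Q)
    (mu : P -> Q -> A) (nu : Q -> P -> B) : Prop :=
  (forall p p' q, mu (p + p') q = mu p q + mu p' q) /\
  (forall p q q', mu p (q + q') = mu p q + mu p q') /\
  (forall p b q, mu (rP p b) q = mu p (lQ b q)) /\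
  (forall a p q, mu (lP a p) q = mulA a (mu p q)) /\
  (forall p q a, mu p (rQ q a) = mulA (mu p q) a) /\
  (forall s t p q, grP s p -> grQ t q -> grA (gmul g s t) (mu p q)) /\
  (forall q q' p, nu (q + q') p = nu q p + nu q' p) /\
  (forall q p p', nu q (p + p') = nu q p + nu q p') /\
  (forall q a p, nu (rQ q a) p = nu q (lP a p)) /\
  (forall b q p, nu (lQ b q) p = mulB b (nu q p)) /\
  (forall q p b, nu q (rP p b) = mulB (nu q p) b) /\
  (forall s t q p, grQ s q -> grP t p -> grB (gmul g s t) (nu q p)) /\
  (forall p' q p, rP p' (nu q p) = lP (mu p' q) p) /\
  (forall q' p q, rQ q' (mu p q) = lQ (nu q' p) q).

(* surjectivity of the trace maps: the image of P (x)_B Q consists of the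
   finite sums of elements <p,q> *)
Definition mu_surjective (A P Q : zmodType) (mu : P -> Q -> A) : Prop :=
  forall a : A, exists l : seq (P * Q), a = \sum_(x <- l) mu x.1 x.2.

Definition torsion (A U : zmodType) (act : A -> U -> U) (u : U) : Prop :=
  forall a : A, act a u = 0.

Definition is_lhom (A P N : zmodType) (actP : A -> P -> P) (actN : A -> N -> N)
    (f : P -> N) : Prop :=
  (forall p p', f (p + p') = f p + f p') /\ (forall a p, f (actP a p) = actN a (f p)).

Definition graded_deg (P N : zmodType) (grP : G -> P -> Prop) (grN : G -> N -> Prop)
    (f : P -> N) (s : G) : Prop :=
  forall t p, grP t p -> grN (gmul g t s) (f p).

(* HOM_A(P,N) = (+)_s HOM_A(P,N)_s, realized inside the maps P -> N *)
Definition HOM (A P N : zmodType) (actP : A -> P -> P) (actN : A -> N -> N)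
    (grP : G -> P -> Prop) (grN : G -> N -> Prop) (f : P -> N) : Prop :=
  exists l : seq (G * (P -> N)),
    (forall x, List.In x l -> is_lhom actP actN x.2 /\ graded_deg grP grN x.2 x.1) /\
    f = (fun p => \sum_(x <- l) x.2 p).

Definition Bact (B P N : zmodType) (rP : P -> B -> P) (b : B) (f : P -> N) : P -> N :=
  fun p => f (rP p b).

Definition BHOM (A B P N : zmodType) (actP : A -> P -> P) (rP : P -> B -> P)
    (actN : A -> N -> N) (grP : G -> P -> Prop) (grN : G -> N -> Prop)
    (f : P -> N) : Prop :=
  exists l : seq (B * (P -> N)),
    (forall x, List.In x l -> HOM actP actN grP grN x.2) /\
    f = (fun p => \sum_(x <- l) Bact rP x.1 x.2 p).

Definition graded_Bmod_iso (B P U V : zmodType) (rP : P -> B -> P)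
    (grP : G -> P -> Prop) (grU : G -> U -> Prop) (grV : G -> V -> Prop)
    (X : (P -> U) -> Prop) (Y : (P -> V) -> Prop)
    (phi : (P -> U) -> (P -> V)) (psi : (P -> V) -> (P -> U)) : Prop :=
  (forall f, X f -> Y (phi f)) /\ (forall h, Y h -> X (psi h)) /\
  (forall f, X f -> psi (phi f) = f) /\ (forall h, Y h -> phi (psi h) = h) /\
  (forall f f', X f -> X f' -> phi (fun p => f p + f' p) = (fun p => phi f p + phi f' p)) /\
  (forall h h', Y h -> Y h' -> psi (fun p => h p + h' p) = (fun p => psi h p + psi h' p)) /\
  (forall b f, X f -> phi (Bact rP b f) = Bact rP b (phi f)) /\
  (forall b h, Y h -> psi (Bact rP b h) = Bact rP b (psi h)) /\
  (forall s f, X f -> graded_deg grP grU f s -> graded_deg grP grV (phi f) s) /\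
  (forall s h, Y h -> graded_deg grP grV h s -> graded_deg grP grU (psi h) s).

End Graded.

From mathcomp Require Import all_boot all_algebra.
From mathcomp Require Import boolp.
From Stdlib Require List.
Set Implicit Arguments. Unset Strict Implicit. Unset Printing Implicit Defensive.
Import GRing.Theory.
Local Open Scope ring_scope.

(** The isomorphism is [f |-> pi \o f], where [pi : U -> V] models [U -> U / t_A(U)].
   It is injective on [B . HOM_A(P, U)]: such maps are A-linear, the difference of two
   maps with the same image takes values in [t_A(U)], and an A-linear map into [t_A(U)]
   vanishes because [P = AP].  For surjectivity, [B = [Q, P]] and
   [(b k)(p) = k (p [q, p']) = <p, q> k p'] write every [h] in [B . HOM_A(P, V)] as a
   finite sum of maps [p |-> <p, q> v] with [q] and [v] homogeneous; lifting each [v] to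
   a homogeneous [u] of the same degree gives a preimage, which lies in [B . HOM_A(P, U)]
   because [Q = BQ].  If [h] has degree [s], dropping the terms of degree other than [s]
   does not change the image under [pi] (homogeneous components of [h p] are unique), so
   by injectivity the preimage has degree [s] as well. *)

Section AdditiveMaps.
Variables (M N : zmodType) (f : M -> N).
Hypothesis fD : {morph f : x y / x + y}.

Lemma addmorph0 : f 0 = 0.
Proof. by apply/(addrI (f 0)); rewrite -fD !addr0. Qed.

Lemma addmorphB x y : f (x - y) = f x - f y.
Proof.
have fN : f (- y) = - f y by apply/(addrI (f y)); rewrite -fD !subrr addmorph0.
by rewrite fD fN.
Qed.

Lemma addmorph_sum I (r : seq I) (P : pred I) (F : I -> M) :
  f (\sum_(i <- r | P i) F i) = \sum_(i <- r | P i) f (F i).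
Proof. exact: (big_morph f fD addmorph0). Qed.

End AdditiveMaps.

Lemma InP (T : eqType) (x : T) (s : seq T) : reflect (List.In x s) (x \in s).
Proof.
elim: s => [|y s IH] /=; first by constructor.
rewrite in_cons; apply: (iffP orP) => [[/eqP ->|/IH]|[->|/IH]]; by [left | right].
Qed.

Lemma uniq_NoDup (T : eqType) (s : seq T) : uniq s -> List.NoDup s.
Proof.
elim: s => [|x s IH] /=; first by constructor.
by case/andP=> xs us; constructor; [move/InP; rewrite (negPf xs) | exact: IH].
Qed.

Section GroupLaw.
Variables (G : Type) (g : group_law G).
Local Notation "x * y" := (gmul g x y).
Local Notation "1" := (gunit g).

Lemma gmulgV x : x * ginv g x = 1.
Proof.
set y := ginv g x.
transitivity ((ginv g y * y) * (x * y)); first by rewrite gmulVg gmul1g.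
by rewrite -gmulA (gmulA g y x y) /y gmulVg gmul1g gmulVg.
Qed.

Lemma gmulg1 x : x * 1 = x.
Proof. by rewrite -(gmulVg g x) gmulA gmulgV gmul1g. Qed.

Lemma gmulI t : injective (gmul g t).
Proof. by move=> x y txy; rewrite -(gmul1g g x) -(gmulVg g t) -gmulA txy gmulA gmulVg gmul1g. Qed.

End GroupLaw.

Definition finsum_of (T X : Type) (N : zmodType) (ok : T -> Prop) (F : T -> X -> N)
    (f : X -> N) : Prop :=
  exists l : seq T, (forall x, List.In x l -> ok x) /\ f = (fun p => \sum_(x <- l) F x p).

Section FiniteSums.
Variables (T X : Type) (N : zmodType) (ok : T -> Prop) (F : T -> X -> N).

Lemma finsum_of0 : finsum_of ok F (fun _ => 0).
Proof. by exists [::]; split => //; apply/funext => p; rewrite big_nil. Qed.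

Lemma finsum_ofD f f' :
  finsum_of ok F f -> finsum_of ok F f' -> finsum_of ok F (fun p => f p + f' p).
Proof.
move=> [l [okl ->]] [l' [okl' ->]]; exists (l ++ l'); split.
  by move=> x xl; case: (List.in_app_or _ _ _ xl) => [/okl | /okl'].
by apply/funext => p; rewrite big_cat.
Qed.

Lemma finsum_of1 x : ok x -> finsum_of ok F (F x).
Proof.
by move=> okx; exists [:: x]; split; [move=> y [<-|] | apply/funext => p; rewrite big_seq1].
Qed.

Lemma finsum_of_sum I (r : seq I) (H : I -> X -> N) :
  (forall i, List.In i r -> finsum_of ok F (H i)) ->
  finsum_of ok F (fun p => \sum_(i <- r) H i p).
Proof.
elim: r => [|i r IH] okH.
  rewrite (_ : (fun p => _) = fun _ => 0); first exact: finsum_of0.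
  by apply/funext => p; rewrite big_nil.
rewrite (_ : (fun p => _) = fun p => H i p + \sum_(j <- r) H j p); last first.
  by apply/funext => p; rewrite big_cons.
by apply: finsum_ofD; [apply: okH; left | apply: IH => j rj; apply: okH; right].
Qed.

Lemma finsum_of_ind (Pr : (X -> N) -> Prop) :
  Pr (fun _ => 0) -> (forall h h', Pr h -> Pr h' -> Pr (fun p => h p + h' p)) ->
  (forall x, ok x -> Pr (F x)) -> forall f, finsum_of ok F f -> Pr f.
Proof.
move=> Pr0 PrD PrF f [l [okl ->]]; elim: l okl => [|x l IH] okl.
  by rewrite (_ : (fun p => _) = fun _ => 0) //; apply/funext => p; rewrite big_nil.
rewrite (_ : (fun p => _) = fun p => F x p + \sum_(y <- l) F y p); last first.
  by apply/funext => p; rewrite big_cons.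
by apply: PrD; [apply/PrF/okl; left | apply: IH => y ly; apply: okl; right].
Qed.

End FiniteSums.

Section Grading.
Variables (G : Type) (M : zmodType) (gr : G -> M -> Prop).
Hypothesis grM : is_grading gr.

Lemma grading0 s : gr s 0.
Proof. by case: grM => /(_ s)[]. Qed.

Lemma gradingN s x : gr s x -> gr s (- x).
Proof. by case: grM => /(_ s)[_ grB] _ grx; rewrite -sub0r; apply: grB => //; apply: grading0. Qed.

Lemma gradingD s x y : gr s x -> gr s y -> gr s (x + y).
Proof.
by case: grM => /(_ s)[_ grB] _ grx gry; rewrite -[y]opprK; apply/grB/gradingN.
Qed.

Lemma grading_sum s I (r : seq I) (P : pred I) (F : I -> M) :
  (forall i, P i -> gr s (F i)) -> gr s (\sum_(i <- r | P i) F i).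
Proof. by move=> grF; apply: big_ind => //; [apply: grading0 | apply: gradingD]. Qed.

End Grading.

Section HomogeneousComponents.
Variables (G : eqType) (M : zmodType) (gr : G -> M -> Prop).
Hypothesis grM : is_grading gr.

Lemma homogeneous_decomposition m :
  exists l : seq (G * M), (forall x, x \in l -> gr x.1 x.2) /\ m = \sum_(x <- l) x.2.
Proof.
by case: grM => _ [/(_ m)[l [grl ->]] _]; exists l; split=> // x /InP/grl.
Qed.

Lemma homogeneous_classes0 (l : seq (G * M)) :
  (forall x, x \in l -> gr x.1 x.2) -> \sum_(x <- l) x.2 = 0 ->
  forall s, \sum_(x <- l | x.1 == s) x.2 = 0.
Proof.
move=> grl l0 s; set ds := undup (map fst l).
have [sds|/negP sNds] := boolP (s \in ds); last first.
  rewrite big1_seq // => x /andP[/eqP xs xl]; case: sNds.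
  by rewrite -xs mem_undup map_f.
(* the sums of the terms of each degree form a decomposition with distinct degrees *)
pose cl := [seq (t, \sum_(x <- l | x.1 == t) x.2) | t <- ds].
suff cl0 : forall y, List.In y cl -> y.2 = 0 by apply: (cl0 (s, _)); apply/InP/map_f.
case: grM => _ [_ uniq_dec]; apply: uniq_dec.
- by rewrite -map_comp map_id; apply/uniq_NoDup/undup_uniq.
- move=> y /InP/mapP[t _ ->] /=; rewrite big_seq_cond.
  by apply: (grading_sum grM) => x /andP[xl /eqP <-]; apply: grl.
rewrite big_map -[RHS]l0.
under eq_bigr do rewrite big_mkcond.
rewrite exchange_big /=; apply: eq_big_seq => x xl.
rewrite -big_mkcond (eq_bigl (pred1 x.1)) => [|t]; last by rewrite /= eq_sym.
by rewrite -big_filter filter_pred1_uniq ?undup_uniq ?mem_undup ?map_f // big_seq1.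
Qed.

Lemma homogeneous_sum_class (l : seq (G * M)) s :
  (forall x, x \in l -> gr x.1 x.2) -> gr s (\sum_(x <- l) x.2) ->
  \sum_(x <- l | x.1 == s) x.2 = \sum_(x <- l) x.2.
Proof.
move=> grl grs.
have : \sum_(x <- (s, - \sum_(x <- l) x.2) :: l | x.1 == s) x.2 = 0.
  apply: homogeneous_classes0; last by rewrite big_cons addNr.
  by move=> x; rewrite in_cons => /predU1P[-> | /grl //]; apply: (gradingN grM).
by move/eqP; rewrite big_cons eqxx addrC subr_eq0 => /eqP.
Qed.

Lemma graded_additive_eq (N : zmodType) (f f' : M -> N) :
  {morph f : x y / x + y} -> {morph f' : x y / x + y} ->
  (forall s m, gr s m -> f m = f' m) -> f =1 f'.
Proof.
move=> fD f'D ff' m; have [l [grl ->]] := homogeneous_decomposition m.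
by rewrite !addmorph_sum //; apply: eq_big_seq => x /grl; apply: ff'.
Qed.

End HomogeneousComponents.

Section LinearMaps.
Variables (G : Type) (g : group_law G) (A B P N : zmodType) (mulB : B -> B -> B).
Variables (grP : G -> P -> Prop) (lP : A -> P -> P) (rP : P -> B -> P).
Variables (grN : G -> N -> Prop) (lN : A -> N -> N).
Hypothesis lN_addr : forall a, {morph lN a : x y / x + y}.
Hypothesis rP_addl : forall b, {morph rP^~ b : p p' / p + p'}.
Hypothesis rP_mulr : forall p b b', rP p (mulB b b') = rP (rP p b) b'.
Hypothesis lP_rP : forall a p b, rP (lP a p) b = lP a (rP p b).

Lemma lhom0 : is_lhom lP lN (fun _ => 0).
Proof. by split=> [p p'|a p]; rewrite ?addr0 // addmorph0. Qed.

Lemma lhomD f f' :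
  is_lhom lP lN f -> is_lhom lP lN f' -> is_lhom lP lN (fun p => f p + f' p).
Proof.
move=> [fD fZ] [f'D f'Z]; split=> [p p'|a p]; first by rewrite fD f'D addrACA.
by rewrite fZ f'Z lN_addr.
Qed.

Lemma lhomB f f' :
  is_lhom lP lN f -> is_lhom lP lN f' -> is_lhom lP lN (fun p => f p - f' p).
Proof.
move=> [fD fZ] [f'D f'Z]; split=> [p p'|a p]; first by rewrite fD f'D opprD addrACA.
by rewrite fZ f'Z addmorphB.
Qed.

Lemma lhom_sum I (r : seq I) (Pr : pred I) (F : I -> P -> N) :
  (forall i, Pr i -> is_lhom lP lN (F i)) ->
  is_lhom lP lN (fun p => \sum_(i <- r | Pr i) F i p).
Proof.
move=> FL; split=> [p p'|a p]; last first.
  by rewrite addmorph_sum //; apply: eq_bigr => i /FL[_ ->].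
by rewrite -big_split; apply: eq_bigr => i /FL[-> _].
Qed.

Lemma lhom_finsum (T : Type) (ok : T -> Prop) (F : T -> P -> N) :
  (forall x, ok x -> is_lhom lP lN (F x)) -> forall f, finsum_of ok F f -> is_lhom lP lN f.
Proof. by move=> okF; apply: finsum_of_ind okF; [exact: lhom0 | exact: lhomD]. Qed.

Lemma Bact_lhom b f : is_lhom lP lN f -> is_lhom lP lN (Bact rP b f).
Proof. by move=> [fD fZ]; split=> [p p'|a p]; rewrite /Bact ?rP_addl ?fD // lP_rP fZ. Qed.

Lemma HOM_lhom f : HOM g lP lN grP grN f -> is_lhom lP lN f.
Proof.
apply: (@lhom_finsum _ (fun x => is_lhom lP lN x.2 /\ graded_deg g grP grN x.2 x.1) snd).
by move=> x [].
Qed.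

Lemma BHOM_lhom f : BHOM g lP rP lN grP grN f -> is_lhom lP lN f.
Proof.
apply: (@lhom_finsum _ (fun x => HOM g lP lN grP grN x.2) (fun x => Bact rP x.1 x.2)).
by move=> x /HOM_lhom; apply: Bact_lhom.
Qed.

Lemma Bact_HOM_BHOM b f : HOM g lP lN grP grN f -> BHOM g lP rP lN grP grN (Bact rP b f).
Proof. exact: (@finsum_of1 _ _ _ (fun x => HOM g lP lN grP grN x.2) _ (b, f)). Qed.

Lemma BHOM_add f f' :
  BHOM g lP rP lN grP grN f -> BHOM g lP rP lN grP grN f' ->
  BHOM g lP rP lN grP grN (fun p => f p + f' p).
Proof. exact: finsum_ofD. Qed.

Lemma BHOM_sum I (r : seq I) (H : I -> P -> N) :
  (forall i, List.In i r -> BHOM g lP rP lN grP grN (H i)) ->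
  BHOM g lP rP lN grP grN (fun p => \sum_(i <- r) H i p).
Proof. exact: finsum_of_sum. Qed.

Lemma BHOM_Bact b f : BHOM g lP rP lN grP grN f -> BHOM g lP rP lN grP grN (Bact rP b f).
Proof.
move=> [l [okl ->]]; exists [seq (mulB b x.1, x.2) | x <- l]; split.
  by move=> y /List.in_map_iff[x [<- /okl]].
by apply/funext => p; rewrite /Bact big_map; under eq_bigr do rewrite rP_mulr.
Qed.

Variables (N' : zmodType) (grN' : G -> N' -> Prop) (lN' : A -> N' -> N') (pi : N -> N').
Hypothesis pi_lhom : is_lhom lN lN' pi.
Hypothesis pi_deg : graded_deg g grN grN' pi (gunit g).

Lemma HOM_comp f : HOM g lP lN grP grN f -> HOM g lP lN' grP grN' (fun p => pi (f p)).
Proof.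
case: pi_lhom => piD piZ [l [okl ->]].
exists [seq (x.1, fun p => pi (x.2 p)) | x <- l]; split; last first.
  by apply/funext => p; rewrite big_map addmorph_sum.
move=> y /List.in_map_iff[x [<- /okl [[xD xZ] xdeg]]]; split; first split.
- by move=> p p'; rewrite /= xD piD.
- by move=> a p; rewrite /= xZ piZ.
by move=> t p /xdeg /pi_deg; rewrite gmulg1.
Qed.

Lemma BHOM_comp f :
  BHOM g lP rP lN grP grN f -> BHOM g lP rP lN' grP grN' (fun p => pi (f p)).
Proof.
case: pi_lhom => piD _ [l [okl ->]].
exists [seq (x.1, fun p => pi (x.2 p)) | x <- l]; split; last first.
  by apply/funext => p; rewrite big_map addmorph_sum.
by move=> y /List.in_map_iff[x [<- /okl /HOM_comp]].
Qed.

End LinearMaps.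

Section IsoFromLift.
Variables (G : Type) (g : group_law G) (B P U V : zmodType) (rP : P -> B -> P).
Variables (grP : G -> P -> Prop) (grU : G -> U -> Prop) (grV : G -> V -> Prop).
Variables (X : (P -> U) -> Prop) (Y : (P -> V) -> Prop) (phi : (P -> U) -> P -> V).
Hypothesis XD : forall f f', X f -> X f' -> X (fun p => f p + f' p).
Hypothesis XB : forall b f, X f -> X (Bact rP b f).
Hypothesis phiY : forall f, X f -> Y (phi f).
Hypothesis phi_inj : forall f f', X f -> X f' -> phi f = phi f' -> f = f'.
Hypothesis phiD : forall f f', X f -> X f' ->
  phi (fun p => f p + f' p) = (fun p => phi f p + phi f' p).
Hypothesis phiB : forall b f, X f -> phi (Bact rP b f) = Bact rP b (phi f).
Hypothesis phi_deg : forall s f, X f -> graded_deg g grP grU f s -> graded_deg g grP grV (phi f) s.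
Hypothesis phi_lift : forall h, Y h -> exists f, [/\ X f, phi f = h &
  forall s, graded_deg g grP grV h s -> graded_deg g grP grU f s].

Lemma graded_Bmod_iso_of_lift :
  exists psi, graded_Bmod_iso g rP grP grU grV X Y phi psi.
Proof.
have /choice[psi psiP] : forall h, exists f, Y h -> [/\ X f, phi f = h &
    forall s, graded_deg g grP grV h s -> graded_deg g grP grU f s].
  move=> h; have [/phi_lift[f fP]|nYh] := pselect (Y h); first by exists f.
  by exists (fun _ => 0) => /nYh.
have psiX h : Y h -> X (psi h) by case/psiP.
have phiK h : Y h -> phi (psi h) = h by case/psiP.
have YD h h' : Y h -> Y h' -> Y (fun p => h p + h' p).
  by move=> Yh Yh'; rewrite -(phiK h) // -(phiK h') // -phiD; auto.
have YB b h : Y h -> Y (Bact rP b h).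
  by move=> Yh; rewrite -(phiK h) // -phiB; auto.
exists psi; split=> [//|]; split=> [//|]; split.
  by move=> f Xf; apply: phi_inj; rewrite ?phiK; auto.
split=> [//|]; split=> [//|]; split.
  by move=> h h' Yh Yh'; apply: phi_inj; rewrite ?phiD ?phiK; auto.
split=> [//|]; split.
  by move=> b h Yh; apply: phi_inj; rewrite ?phiB ?phiK; auto.
by split=> [//| s h /psiP[_ _]]; apply.
Qed.

End IsoFromLift.

Definition mu_map (A P Q N : zmodType) (mu : P -> Q -> A) (lN : A -> N -> N)
    (q : Q) (n : N) : P -> N :=
  fun p => lN (mu p q) n.

Definition homogeneous_pair (G : Type) (Q N : zmodType) (grQ : G -> Q -> Prop)
    (grN : G -> N -> Prop) (x : (G * Q) * (G * N)) : Prop :=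
  grQ x.1.1 x.1.2 /\ grN x.2.1 x.2.2.

Section MoritaContext.
Variables (G : eqType) (g : group_law G).
Variables (A : zmodType) (grA : G -> A -> Prop) (mulA : A -> A -> A).
Variables (B : zmodType) (mulB : B -> B -> B).
Variables (P : zmodType) (grP : G -> P -> Prop) (lP : A -> P -> P) (rP : P -> B -> P).
Variables (Q : zmodType) (grQ : G -> Q -> Prop) (lQ : B -> Q -> Q).
Variables (mu : P -> Q -> A) (nu : Q -> P -> B).
Hypothesis gradedP : is_grading grP.
Hypothesis gradedQ : is_grading grQ.
Hypothesis rP_addl : forall b, {morph rP^~ b : p p' / p + p'}.
Hypothesis rP_addr : forall p, {morph rP p : b b' / b + b'}.
Hypothesis rP_mulr : forall p b b', rP p (mulB b b') = rP (rP p b) b'.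
Hypothesis lP_rP : forall a p b, rP (lP a p) b = lP a (rP p b).
Hypothesis P_lunital : lunital lP.
Hypothesis Q_lunital : lunital lQ.
Hypothesis mu_addl : forall q, {morph mu^~ q : p p' / p + p'}.
Hypothesis mu_addr : forall p, {morph mu p : q q' / q + q'}.
Hypothesis mu_rP : forall p b q, mu (rP p b) q = mu p (lQ b q).
Hypothesis mu_lP : forall a p q, mu (lP a p) q = mulA a (mu p q).
Hypothesis mu_graded : forall s t p q, grP s p -> grQ t q -> grA (gmul g s t) (mu p q).
Hypothesis rP_nu : forall p' q p, rP p' (nu q p) = lP (mu p' q) p.
Hypothesis nu_surj : mu_surjective nu.

Section GradedModule.
Variables (N : zmodType) (grN : G -> N -> Prop) (lN : A -> N -> N).
Hypothesis gradedN : is_grading grN.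
Hypothesis lN_addr : forall a, {morph lN a : x y / x + y}.
Hypothesis lN_addl : forall n, {morph lN^~ n : a a' / a + a'}.
Hypothesis lN_graded : forall s t a n, grA s a -> grN t n -> grN (gmul g s t) (lN a n).

Local Notation mu_maps :=
  (finsum_of (homogeneous_pair grQ grN) (fun x => mu_map mu lN x.1.2 x.2.2)).

Lemma mu_map_finsum q n : mu_maps (mu_map mu lN q n).
Proof.
have [lq [grlq ->]] := homogeneous_decomposition gradedQ q.
have [ln [grln ->]] := homogeneous_decomposition gradedN n.
rewrite (_ : mu_map _ _ _ _ = fun p => \sum_(x <- lq) \sum_(y <- ln) mu_map mu lN x.2 y.2 p).
  apply: finsum_of_sum => x /InP xlq; apply: finsum_of_sum => y /InP yln.
  exact: (finsum_of1 _ (x := (x, y)) (conj (grlq x xlq) (grln y yln))).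
apply/funext => p; rewrite /mu_map (addmorph_sum (mu_addr p)) (addmorph_sum (lN_addl _)).
by apply: eq_bigr => x _; rewrite addmorph_sum.
Qed.

Lemma BHOM_mu_maps f : BHOM g lP rP lN grP grN f -> mu_maps f.
Proof.
apply: (@finsum_of_ind _ _ _ (fun x => HOM g lP lN grP grN x.2) (fun x => Bact rP x.1 x.2)).
- exact: finsum_of0.
- exact: finsum_ofD.
move=> [b k] /= /(HOM_lhom lN_addr) [kD kZ]; have [l ->] := nu_surj b.
rewrite (_ : Bact _ _ _ = fun p => \sum_(x <- l) mu_map mu lN x.1 (k x.2) p).
  by apply: finsum_of_sum => x _; apply: mu_map_finsum.
apply/funext => p; rewrite /Bact (addmorph_sum (rP_addr p)) (addmorph_sum kD).
by apply: eq_bigr => x _; rewrite rP_nu kZ.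
Qed.

Lemma mu_maps_degree_class (l : seq ((G * Q) * (G * N))) s :
  (forall x, List.In x l -> homogeneous_pair grQ grN x) ->
  graded_deg g grP grN (fun p => \sum_(x <- l) mu_map mu lN x.1.2 x.2.2 p) s ->
  forall t p, grP t p ->
  \sum_(x <- l | gmul g x.1.1 x.2.1 == s) mu_map mu lN x.1.2 x.2.2 p =
  \sum_(x <- l) mu_map mu lN x.1.2 x.2.2 p.
Proof.
move=> grl hs t p grp.
pose lt := [seq (gmul g t (gmul g x.1.1 x.2.1), mu_map mu lN x.1.2 x.2.2 p) | x <- l].
have lt_class : \sum_(y <- lt | y.1 == gmul g t s) y.2 = \sum_(y <- lt) y.2.
  apply: (homogeneous_sum_class gradedN); last by rewrite big_map; apply: hs.
  move=> y /mapP[x /InP/grl[grq grn] ->]; rewrite gmulA.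
  exact: lN_graded (mu_graded grp grq) grn.
move: lt_class; rewrite !big_map (eq_bigl (fun x => gmul g x.1.1 x.2.1 == s)) // => x.
by rewrite /= (inj_eq (@gmulI _ g t)).
Qed.

End GradedModule.

Variables (U : zmodType) (grU : G -> U -> Prop) (lU : A -> U -> U).
Variables (V : zmodType) (grV : G -> V -> Prop) (lV : A -> V -> V) (pi : U -> V).
Hypothesis gradedU : is_grading grU.
Hypothesis lU_addr : forall a, {morph lU a : x y / x + y}.
Hypothesis lU_addl : forall u, {morph lU^~ u : a a' / a + a'}.
Hypothesis lU_mul : forall a a' u, lU (mulA a a') u = lU a (lU a' u).
Hypothesis lU_graded : forall s t a u, grA s a -> grU t u -> grU (gmul g s t) (lU a u).
Hypothesis gradedV : is_grading grV.
Hypothesis lV_addr : forall a, {morph lV a : x y / x + y}.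
Hypothesis lV_addl : forall v, {morph lV^~ v : a a' / a + a'}.
Hypothesis lV_graded : forall s t a v, grA s a -> grV t v -> grV (gmul g s t) (lV a v).
Hypothesis pi_add : {morph pi : u u' / u + u'}.
Hypothesis pi_lin : forall a u, pi (lU a u) = lV a (pi u).
Hypothesis pi_deg : graded_deg g grU grV pi (gunit g).
Hypothesis pi_surj : forall v, exists u, pi u = v.
Hypothesis pi_ker : forall u, pi u = 0 <-> torsion lU u.

Lemma mu_map_lhom q u : is_lhom lP lU (mu_map mu lU q u).
Proof. by split=> [p p'|a p]; rewrite /mu_map ?mu_addl ?lU_addl // mu_lP lU_mul. Qed.

Lemma mu_map_graded s t q u :
  grQ s q -> grU t u -> graded_deg g grP grU (mu_map mu lU q u) (gmul g s t).
Proof. by move=> grq gru r p grp; rewrite gmulA; apply: lU_graded (mu_graded grp grq) gru. Qed.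

Lemma HOM_mu_map q u : HOM g lP lU grP grU (mu_map mu lU q u).
Proof.
have [l [grl ->]] := mu_map_finsum gradedU lU_addr lU_addl q u.
exists [seq (gmul g x.1.1 x.2.1, mu_map mu lU x.1.2 x.2.2) | x <- l]; split.
  move=> y /List.in_map_iff[x [<- /grl[grq gru]]].
  by split; [apply: mu_map_lhom | apply: mu_map_graded].
by apply/funext => p; rewrite big_map.
Qed.

Lemma BHOM_mu_map q u : BHOM g lP rP lU grP grU (mu_map mu lU q u).
Proof.
have [l ->] := Q_lunital q.
rewrite (_ : mu_map _ _ _ _ = fun p => \sum_(x <- l) Bact rP x.1 (mu_map mu lU x.2 u) p).
  by apply: BHOM_sum => x _; apply/Bact_HOM_BHOM/HOM_mu_map.
apply/funext => p; rewrite /mu_map /Bact (addmorph_sum (mu_addr p)) (addmorph_sum (lU_addl u)).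
by apply: eq_bigr => x _; rewrite mu_rP.
Qed.

Lemma lhom_torsion0 f : is_lhom lP lU f -> (forall p, torsion lU (f p)) -> forall p, f p = 0.
Proof.
move=> [fD fZ] ft p; have [l ->] := P_lunital p.
by rewrite addmorph_sum // big1 // => x _; rewrite fZ ft.
Qed.

Lemma lhom_pi_inj f f' : is_lhom lP lU f -> is_lhom lP lU f' ->
  (forall p, pi (f p) = pi (f' p)) -> f = f'.
Proof.
move=> fL f'L piff'; apply/funext => p; apply/eqP; rewrite -subr_eq0; apply/eqP.
apply: (lhom_torsion0 (lhomB lU_addr fL f'L)) => p'.
by apply/pi_ker; rewrite addmorphB // piff' subrr.
Qed.

Lemma homogeneous_preimage s v : grV s v -> exists2 u, grU s u & pi u = v.
Proof.
have [u0 <-] := pi_surj v; have [l [grl ->]] := homogeneous_decomposition gradedU u0.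
move=> grs; exists (\sum_(x <- l | x.1 == s) x.2).
  by rewrite big_seq_cond; apply: grading_sum => // x /andP[/grl grx /eqP <-].
have := @homogeneous_sum_class _ _ _ gradedV [seq (x.1, pi x.2) | x <- l] s.
rewrite !big_map !addmorph_sum //; apply; last by rewrite -addmorph_sum.
by move=> y /mapP[x /grl grx ->] /=; rewrite -[x.1](gmulg1 g); apply: pi_deg.
Qed.

Lemma homogeneous_lift :
  exists lift : G * V -> U, forall x, grV x.1 x.2 -> grU x.1 (lift x) /\ pi (lift x) = x.2.
Proof.
have /choice[lift liftP] : forall x : G * V, exists u, grV x.1 x.2 -> grU x.1 u /\ pi u = x.2.
  move=> [s v]; have [/homogeneous_preimage[u gru <-]|nv] := pselect (grV s v).
    by exists u.
  by exists 0 => /nv.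
by exists lift.
Qed.

Lemma BHOM_lift h : BHOM g lP rP lV grP grV h ->
  exists f, [/\ BHOM g lP rP lU grP grU f, (fun p => pi (f p)) = h &
    forall s, graded_deg g grP grV h s -> graded_deg g grP grU f s].
Proof.
move=> hBH; have [l [grl hE]] := BHOM_mu_maps gradedV lV_addr lV_addl hBH.
have [lift liftP] := homogeneous_lift.
pose lift_map (x : (G * Q) * (G * V)) := mu_map mu lU x.1.2 (lift x.2).
have lift_mapL x : is_lhom lP lU (lift_map x) by apply: mu_map_lhom.
have pi_lift_map x p : List.In x l -> pi (lift_map x p) = mu_map mu lV x.1.2 x.2.2 p.
  by move=> /grl[_ /liftP[_ pix]]; rewrite /lift_map /mu_map pi_lin pix.
pose f p := \sum_(x <- l) lift_map x p.
have piE p : pi (f p) = h p.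
  by rewrite hE addmorph_sum //; apply: eq_big_seq => x /InP; apply: pi_lift_map.
exists f; split; first by apply: BHOM_sum => x _; apply: BHOM_mu_map.
  by apply/funext => p; apply: piE.
move=> s hs; pose fs p := \sum_(x <- l | gmul g x.1.1 x.2.1 == s) lift_map x p.
have fsL : is_lhom lP lU fs by exact: lhom_sum.
suff -> : f = fs.
  move=> t p grp; rewrite /fs big_seq_cond; apply: (grading_sum gradedU) => x.
  by case/andP=> /InP/grl[grq /liftP[gru _]] /eqP <-; apply: mu_map_graded.
apply: (lhom_pi_inj _ fsL) => [|p]; first exact: lhom_sum.
rewrite piE; move: p.
apply: (graded_additive_eq gradedP (f' := fun p => pi (fs p))) => [p1 p2|p1 p2|t p grp].
- by case: (BHOM_lhom lV_addr rP_addl lP_rP hBH).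
- by case: fsL => fsD _; rewrite fsD pi_add.
rewrite hE in hs *; rewrite -(mu_maps_degree_class gradedV lV_graded grl hs grp).
rewrite /fs addmorph_sum // big_seq_cond [RHS]big_seq_cond.
by apply: eq_bigr => x /andP[/InP xl _]; rewrite pi_lift_map.
Qed.

Lemma BHOM_quotient_iso : exists (phi : (P -> U) -> (P -> V)) (psi : (P -> V) -> (P -> U)),
  graded_Bmod_iso g rP grP grU grV
    (BHOM g lP rP lU grP grU) (BHOM g lP rP lV grP grV) phi psi.
Proof.
exists (fun f p => pi (f p)); apply: graded_Bmod_iso_of_lift.
- exact: BHOM_add.
- exact: BHOM_Bact rP_mulr.
- exact: BHOM_comp (conj pi_add pi_lin) pi_deg.
- move=> f f' /(BHOM_lhom lU_addr rP_addl lP_rP) fL /(BHOM_lhom lU_addr rP_addl lP_rP) f'L.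
  by move=> piff'; apply: lhom_pi_inj fL f'L _ => p; apply: (congr1 (@^~ p) piff').
- by move=> f f' _ _; apply/funext => p; rewrite pi_add.
- by [].
- by move=> s f _ fs t p /fs /pi_deg; rewrite gmulg1.
exact: BHOM_lift.
Qed.

End MoritaContext.

Unset Implicit Arguments.

Theorem corollary5p5
    (G : Type) (g : group_law G)
    (A : zmodType) (grA : G -> A -> Prop) (mulA : A -> A -> A)
    (B : zmodType) (grB : G -> B -> Prop) (mulB : B -> B -> B)
    (P : zmodType) (grP : G -> P -> Prop) (lP : A -> P -> P) (rP : P -> B -> P)
    (Q : zmodType) (grQ : G -> Q -> Prop) (lQ : B -> Q -> Q) (rQ : Q -> A -> Q)
    (mu : P -> Q -> A) (nu : Q -> P -> B)
    (hA : is_graded_ring g grA mulA) (hAi : idempotent_ring mulA)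
    (hB : is_graded_ring g grB mulB) (hBi : idempotent_ring mulB)
    (hP : is_unital_graded_bimod g grA mulA grB mulB grP lP rP)
    (hQ : is_unital_graded_bimod g grB mulB grA mulA grQ lQ rQ)
    (hM : graded_morita_context g grA mulA grB mulB grP lP rP grQ lQ rQ mu nu)
    (hmu : mu_surjective mu) (hnu : mu_surjective nu)
    (U : zmodType) (grU : G -> U -> Prop) (lU : A -> U -> U)
    (hU : is_graded_lmod g grA mulA grU lU) (hUu : lunital lU)
    (V : zmodType) (grV : G -> V -> Prop) (lV : A -> V -> V)
    (hV : is_graded_lmod g grA mulA grV lV)
    (pi : U -> V) (hpi : is_lhom lU lV pi) (hpig : graded_deg g grU grV pi (gunit g))
    (hpis : forall v : V, exists u : U, pi u = v)
    (hpik : forall u : U, pi u = 0 <-> torsion lU u) :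
  exists (phi : (P -> U) -> (P -> V)) (psi : (P -> V) -> (P -> U)),
    graded_Bmod_iso g rP grP grU grV
      (BHOM g lP rP lU grP grU) (BHOM g lP rP lV grP grV) phi psi.
Proof.
case: hP => [[gradedP _] [[_] [rP_addl] [rP_addr] [rP_mulr] _] [lP_rP] [P_lunital] _].
case: hQ => [[gradedQ _] [_] [_] [Q_lunital] _].
case: hM => [mu_addl] [mu_addr] [mu_rP] [mu_lP] [_] [mu_graded] [_] [_] [_] [_] [_] [_] [rP_nu] _.
case: hU => [gradedU [lU_addr] [lU_addl] [lU_mul] lU_graded].
case: hV => [gradedV [lV_addr] [lV_addl] [_] lV_graded].
case: hpi => pi_add pi_lin.
(* Grouping homogeneous components by degree needs a decidable equality on the grading
   group, which [{classic G}] provides. *)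
exact: (BHOM_quotient_iso (G := {classic G})
  gradedP gradedQ (fun b p p' => rP_addl p p' b) rP_addr rP_mulr lP_rP P_lunital Q_lunital
  (fun q p p' => mu_addl p p' q) mu_addr mu_rP mu_lP mu_graded rP_nu hnu
  gradedU lU_addr (fun u a a' => lU_addl a a' u) lU_mul lU_graded
  gradedV lV_addr (fun v a a' => lV_addl a a' v) lV_graded pi_add pi_lin hpig hpis hpik).
Qed.
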